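(* For $d\ge1$ let $$A_d=\frac1{d!}\sum_{(i_d,\dots,i_1)\in[m+n]^d}L(e_{i_d})\cdots L(e_{i_1})L(e_{i_1}^\ast)\cdots L(e_{i_d}^\ast).$$ Then $A_d(\varphi)=\varphi$ for every $\varphi\in\overline T_d(V)$.
   Context: Let $m,n\ge 1$ and $V=\mathbb C^{m|n}$ with standard basis $e_1,\dots,e_{m+n}$, where $|e_i|=0$ for $i\le m$ and $|e_i|=1$ for $i>m$; let $e_1^\ast,\dots,e_{m+n}^\ast$ be the dual basis with $|e_i^\ast|=|e_i|$. $[m+n]=\{1,\dots,m+n\}$. All vectors are homogeneous. A pure tensor $v_d\otimes\cdots\otimes v_1\in V^{\otimes d}$ is written $v_d\cdots v_1$ (factors indexed decreasingly from left to right). $\mathfrak S_d$ is the symmetric group on $\{1,\dots,d\}$, $s_i=(i\ i+1)$, $\mathfrak S_\infty=\bigcup_d\mathfrak S_d$, and for $k\ge1$ the group homomorphism $\sigma\mapsto\sigma^{\uparrow k}$ of $\mathfrak S_\infty$ is defined by $s_i^{\uparrow k}=s_{i+k}$. The right action of $\mathfrak S_d$ on $V^{\otimes d}$ is $(v_d\cdots v_1).s_i=(-1)^{|v_i||v_{i+1}|}v_d\cdots v_{i+2}v_iv_{i+1}v_{i-1}\cdots v_1$ (the factors in positions $i,i+1$ are swapped). Set $\overline T_d(V)=V^{\otimes d}\otimes_{\mathbb C\mathfrak S_d}\mathbb C\mathfrak S_\infty$ (so $\overline T_0(V)=\mathbb C\mathfrak S_\infty$) and $\overline T(V)=\bigoplus_{d\ge0}\overline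 T_d(V)$, with the associative product $(u_k\cdots u_1\otimes\tau)\cdot(v_d\cdots v_1\otimes\sigma)=u_k\cdots u_1v_d\cdots v_1\otimes\tau^{\uparrow d}\sigma$. For $\varphi\in\overline T(V)$, $L(\varphi)$ denotes left multiplication by $\varphi$; in particular $L(v)$ for $v\in V$ (identified with $v\otimes 1\in\overline T_1(V)$). For homogeneous $v^\ast\in V^\ast$, $L(v^\ast)$ is the linear map with $L(v^\ast)=0$ on $\overline T_0(V)$ and $$L(v^\ast)(v_d\cdots v_1\otimes\sigma)=\sum_{k=1}^d(-1)^{|v^\ast|(|v_d|+\cdots+|v_{k+1}|)}\langle v^\ast,v_k\rangle\, v_d\cdots\widehat{v_k}\cdots v_1\otimes s_{d-1}s_{d-2}\cdots s_k\,\sigma,$$ where $\widehat{v_k}$ means omission and the product $s_{d-1}\cdots s_k$ is $1$ for $k=d$; $L$ is extended linearly to all of $V^\ast$. *)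

From HB Require Import structures.
From mathcomp Require Import all_boot all_order all_algebra.
From mathcomp Require Import reals complex.
From mathcomp.multinomials Require Import monalg.

Set Implicit Arguments.
Unset Strict Implicit.
Unset Printing Implicit Defensive.

Import GRing.Theory Num.Theory.
Local Open Scope ring_scope.

(* The infinite symmetric group S_oo = finitary permutations.               *)
(* Points: S_oo acts on {1,2,3,...}; point p is encoded by the nat p-1.     *)
(* An element is encoded by the sequence [sigma 0; ...; sigma (N-1)] of its *)
(* values on an initial segment outside of which it is the identity, in the *)
(* normal form where trailing fixed points are dropped (so the encoding is  *)
(* unique and equality of permutations is equality of encodings).           *)

Definition fperm_ok (s : seq nat) : bool :=
  perm_eq s (iota 0 (size s)) && ((s == [::]) || (last 0%N s != (size s).-1)).

Record finperm := FinPerm { fperm_val :> seq nat; fperm_valP : fperm_ok fperm_val }.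

HB.instance Definition _ := [isSub for fperm_val].
HB.instance Definition _ := [Countable of finperm by <:].

Lemma fperm1_ok : fperm_ok [::]. Proof. by []. Qed.
Definition fperm1 : finperm := FinPerm fperm1_ok.

Definition fperm_fun (s : finperm) (x : nat) : nat := nth x s x.

Definition drop_fix (t : seq nat) : seq nat :=
  if t is [::] then t
  else if last 0%N t == (size t).-1 then take (size t).-1 t else t.
Definition normalize (t : seq nat) : seq nat := iter (size t) drop_fix t.

(* the finitary permutation that agrees with f on [0, N) and is the identity
   beyond (meaningful when f permutes [0, N)). *)
Definition fperm_of (N : nat) (f : nat -> nat) : finperm :=
  insubd fperm1 (normalize (mkseq f N)).

(* the transposition s_j = (j j+1) of S_oo (j >= 1), on encoded points *)
Definition transp (j x : nat) : nat :=
  if x == j.-1 then j else if x == j then j.-1 else x.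

Definition lmul_s (j : nat) (s : finperm) : finperm :=
  fperm_of (maxn (size s) j.+1) (fun x => transp j (fperm_fun s x)).

(* s_(d-1) s_(d-2) ... s_k sigma  (equal to sigma when k = d) *)
Definition cycle_mul (d k : nat) (s : finperm) : finperm :=
  foldl (fun t j => lmul_s j t) s (iota k (d - k)).

(* The free space on pure basis tensors e_{w} (x) sigma, all degrees.        *)
(* A word w : seq 'I_(m+n) of size d encodes e_{w_d} ... e_{w_1} written    *)
(* left to right, i.e. the head of the list is the factor of index d:        *)
(* v_k is the element of w at list index d-k.  Basis index i : 'I_(m+n)     *)
(* (0-based) stands for e_{i+1}; its parity is 1 iff i >= m.                *)

Section Tensor.
Variables (R : realType) (m n : nat).

Definition C := (R[i])%type.
Definition word := seq 'I_(m + n).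
Definition basis := (word * finperm)%type.
Definition F := {malg C[basis]}.

Definition par (i : 'I_(m + n)) : nat := (m <= i)%N.

Definition linext (f : basis -> F) (x : F) : F :=
  \sum_(b <- finmap.enum_fset (msupp x)) x@_b *: f b.

(* Swapping the list entries at positions a and a+1 (with the Koszul sign):
   this is the right action of s_i with a = d-i-1. *)
Definition swap_at (a : nat) (w : word) : C * word :=
  match drop a w with
  | x :: y :: r => ((-1) ^+ (par x * par y), take a w ++ y :: x :: r)
  | _ => (1, w)
  end.

(* Generator of the relation subspace of V^{(x)d} (x)_{C S_d} C S_oo:
   (v_d...v_1).s_i (x) sigma  -  v_d...v_1 (x) s_i sigma,  for 1 <= i < d. *)
Definition relgen (w : word) (i : nat) (s : finperm) : F :=
  if (0 < i < size w)%N then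
    let: (c, w') := swap_at (size w - i.+1) w in
    c *: << (w', s) >> - << (w, lmul_s i s) >>
  else 0.

Definition rel_space (x : F) : Prop :=
  exists g : seq (C * (word * nat * finperm)),
    x = \sum_(t <- g) t.1 *: relgen t.2.1.1 t.2.1.2 t.2.2.

(* x and y represent the same element of bar T(V) *)
Definition Teq (x y : F) : Prop := rel_space (x - y).

(* x represents an element of bar T_d(V) *)
Definition homog (d : nat) (x : F) : Prop :=
  forall b : basis, x@_b != 0 -> size b.1 = d.

Definition Lv (j : 'I_(m + n)) : F -> F :=
  linext (fun b => << (j :: b.1, b.2) >>).

(* L(e_j^dual), following the defining formula (k = 1..d; v_k at index d-k,
   v_d ... v_(k+1) = take (d-k) w). *)
Definition Ldual (j : 'I_(m + n)) : F -> F :=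
  linext (fun b =>
    let w := b.1 in let d := size w in
    \sum_(1 <= k < d.+1)
      (if ohead (drop (d - k) w) == Some j then
         (-1) ^+ (par j * \sum_(t <- take (d - k) w) par t) *:
           << (take (d - k) w ++ drop (d - k).+1 w, cycle_mul d k b.2) >>
       else 0)).

(* A_d = 1/d! sum_{(i_d,...,i_1)} L(e_{i_d})...L(e_{i_1}) L(e*_{i_1})...L(e*_{i_d});
   the tuple u lists (i_d, ..., i_1) from head to tail. *)
Definition A (d : nat) (x : F) : F :=
  (d`!%:R)^-1 *:
    \sum_(u : d.-tuple 'I_(m + n))
       foldr (fun i y => Lv i y) (foldl (fun y i => Ldual i y) x u) u.

End Tensor.

(* The Euler operator \sum_j L(e_j) L(e_j^∗) is multiplication by d on
   bar T_d(V): the k-th term of L(e_j^∗) deletes v_k = e_j and L(e_j) puts it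
   back in front, and the Koszul sign and the permutation s_(d-1)...s_k
   recorded on the way are exactly what the relations of the tensor product
   over C S_d need to move v_k from the front back to position k.  Peeling
   off the outermost pair L(e_i) ... L(e_i^∗) of d! A_d leaves (d-1)! A_(d-1)
   applied to L(e_i^∗) phi, of degree d-1, so by induction d! A_d phi is the
   Euler operator applied to (d-1)! phi, that is d! phi. *)
From HB Require Import structures.
From mathcomp Require Import all_boot all_order all_algebra.
From mathcomp Require Import reals complex.
From mathcomp.multinomials Require Import monalg.
From mathcomp Require Import finmap zify.
Set Implicit Arguments.
Unset Strict Implicit.
Unset Printing Implicit Defensive.

Local Open Scope fset_scope.
Local Open Scope ring_scope.
Import GRing.Theory Num.Theory.

Lemma big_tupleS (V : nmodType) (T : finType) (d : nat) (G : d.+1.-tuple T -> V) :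
  \sum_(u : d.+1.-tuple T) G u = \sum_(j : T) \sum_(t : d.-tuple T) G [tuple of j :: t].
Proof.
rewrite pair_big /= (reindex (fun p : T * d.-tuple T => [tuple of p.1 :: p.2])) //=.
exists (fun u : d.+1.-tuple T => (thead u, [tuple of behead u])) => [[j t] _ | u _].
  by congr (_, _); apply: val_inj.
by rewrite [RHS]tuple_eta.
Qed.

Section TensorAlgebra.
Variables (R : realType) (m n : nat).
Local Notation F := (F R m n).
Local Notation C := (C R).
Local Notation I := ('I_(m + n)).
Local Notation word := (word m n).
Local Notation basis := (basis m n).
Local Notation par := (@par m n).
Local Notation linext := (@linext R m n).
Local Notation relgen := (@relgen R m n).
Local Notation swap_at := (@swap_at R m n).
Local Notation rel_space := (@rel_space R m n).
Local Notation Teq := (@Teq R m n).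
Local Notation homog := (@homog R m n).
Local Notation Lv := (@Lv R m n).
Local Notation Ldual := (@Ldual R m n).

Lemma linext_supp (f : basis -> F) (x : F) (D : {fset basis}) :
  msupp x `<=` D -> linext f x = \sum_(b <- D) x@_b *: f b.
Proof.
move=> le; rewrite /linext (big_fset_incl _ le) //= => b _ /mcoeff_outdom ->.
by rewrite scale0r.
Qed.

Lemma linext_is_linear (f : basis -> F) : linear (linext f).
Proof.
move=> c x y; pose D := msupp x `|` msupp y.
rewrite (@linext_supp f x D) ?fsubsetUl // (@linext_supp f y D) ?fsubsetUr //.
rewrite (@linext_supp f (c *: x + y) D); last first.
  exact: fsubset_trans (msuppD_le _ _) (fsetSU _ (msuppZ_le _ _)).
rewrite scaler_sumr -big_split /=; apply: eq_bigr => b _.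
by rewrite mcoeffD mcoeffZ scalerDl scalerA.
Qed.

HB.instance Definition _ (f : basis -> F) :=
  GRing.isLinear.Build C F F *:%R (linext f) (linext_is_linear f).
HB.instance Definition _ (j : I) := GRing.Linear.copy (Lv j) (Lv j).
HB.instance Definition _ (j : I) := GRing.Linear.copy (Ldual j) (Ldual j).

Lemma linextU (f : basis -> F) (b : basis) : linext f << b >> = f b.
Proof. by rewrite (@linext_supp f _ _ msuppU_le) big_seq_fset1 mcoeffUU scale1r. Qed.

Lemma monalgZE (x : F) : x = \sum_(b <- msupp x) x@_b *: << b >>.
Proof.
rewrite [LHS]monalgE; apply: eq_bigr => b _.
apply/malgP => k; rewrite mcoeffZ !mcoeffU.
by case: eqP => _; rewrite ?mulr1 ?mulr0.
Qed.

Lemma LvU (j : I) (b : basis) : Lv j << b >> = << (j :: b.1, b.2) >>.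
Proof. exact: linextU. Qed.

Lemma rel_space0 : rel_space 0.
Proof. by exists [::]; rewrite big_nil. Qed.

Lemma rel_spaceD (x y : F) : rel_space x -> rel_space y -> rel_space (x + y).
Proof. by move=> [g1 ->] [g2 ->]; exists (g1 ++ g2); rewrite big_cat. Qed.

Lemma rel_spaceZ (c : C) (x : F) : rel_space x -> rel_space (c *: x).
Proof.
move=> [g ->]; exists [seq (c * t.1, t.2) | t <- g].
by rewrite big_map scaler_sumr; apply: eq_bigr => t _; rewrite scalerA.
Qed.

Lemma rel_space_sum (J : Type) (r : seq J) (G : J -> F) :
  (forall j, rel_space (G j)) -> rel_space (\sum_(j <- r) G j).
Proof.
move=> relG; elim: r => [|a r IH]; first by rewrite big_nil; exact: rel_space0.
by rewrite big_cons; apply: rel_spaceD.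
Qed.

Lemma rel_space_relgen (w : word) (i : nat) (s : finperm) : rel_space (relgen w i s).
Proof. by exists [:: (1, (w, i, s))]; rewrite big_seq1 scale1r. Qed.

Lemma swap_at_cons (a : nat) (j : I) (w : word) :
  swap_at a.+1 (j :: w) = ((swap_at a w).1, j :: (swap_at a w).2).
Proof. by rewrite /swap_at /=; case: (drop a w) => [|x [|y r]]. Qed.

(* Left multiplication preserves the relations because s_i with i < d acts on
   the d rightmost factors only. *)
Lemma Lv_relgen (j : I) (w : word) (i : nat) (s : finperm) :
  Lv j (relgen w i s) = if (0 < i < size w)%N then relgen (j :: w) i s else 0.
Proof.
rewrite /relgen /=; case: ifP => [/andP[i_gt0 i_lt]|_]; last exact: linear0.
rewrite i_gt0 ltnW //= subSS -(subnSK i_lt) swap_at_cons.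
by case: (swap_at _ w) => c w' /=; rewrite linearB linearZ /= !LvU.
Qed.

Lemma rel_space_Lv (j : I) (x : F) : rel_space x -> rel_space (Lv j x).
Proof.
move=> [g ->]; rewrite linear_sum; apply: rel_space_sum => t.
rewrite linearZ /= Lv_relgen; case: ifP => _; last by rewrite scaler0; exact: rel_space0.
by apply: rel_spaceZ; apply: rel_space_relgen.
Qed.

Lemma Teq_refl (x : F) : Teq x x.
Proof. by rewrite /Teq subrr; exact: rel_space0. Qed.

Lemma Teq_sym (x y : F) : Teq x y -> Teq y x.
Proof. by rewrite /Teq => /(rel_spaceZ (-1)); rewrite scaleN1r opprB. Qed.

Lemma Teq_trans (x y z : F) : Teq x y -> Teq y z -> Teq x z.
Proof. by rewrite /Teq => rxy /(rel_spaceD rxy); rewrite addrA subrK. Qed.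

Lemma TeqD (x1 y1 x2 y2 : F) : Teq x1 y1 -> Teq x2 y2 -> Teq (x1 + x2) (y1 + y2).
Proof. by rewrite /Teq => r1 /(rel_spaceD r1); rewrite opprD addrACA. Qed.

Lemma TeqZ (c : C) (x y : F) : Teq x y -> Teq (c *: x) (c *: y).
Proof. by rewrite /Teq => /(rel_spaceZ c); rewrite scalerBr. Qed.

Lemma Teq_sum (J : eqType) (r : seq J) (G H : J -> F) :
  (forall j, j \in r -> Teq (G j) (H j)) ->
  Teq (\sum_(j <- r) G j) (\sum_(j <- r) H j).
Proof.
elim: r => [|a r IH] GH; first by rewrite !big_nil; exact: Teq_refl.
rewrite !big_cons; apply: TeqD; first by apply: GH; rewrite mem_head.
by apply: IH => j jr; apply: GH; rewrite in_cons jr orbT.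
Qed.

Lemma Teq_Lv (j : I) (x y : F) : Teq x y -> Teq (Lv j x) (Lv j y).
Proof. by rewrite /Teq -linearB; apply: rel_space_Lv. Qed.

Lemma homog0 (d : nat) : homog d 0.
Proof. by move=> b; rewrite mcoeff0 eqxx. Qed.

Lemma homogU (d : nat) (b : basis) : size b.1 = d -> homog d << b >>.
Proof.
move=> sb b'; rewrite mcoeffU; have [<-|_] := eqVneq b b'; first by [].
by rewrite mulr0n eqxx.
Qed.

Lemma homogZ (d : nat) (c : C) (x : F) : homog d x -> homog d (c *: x).
Proof. by move=> hx b; rewrite mcoeffZ mulf_eq0 negb_or => /andP[_ /hx]. Qed.

Lemma homogD (d : nat) (x y : F) : homog d x -> homog d y -> homog d (x + y).
Proof.
move=> hx hy b; rewrite mcoeffD.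
by have [->|/hx //] := eqVneq x@_b 0; rewrite add0r => /hy.
Qed.

Lemma homog_sum (d : nat) (J : eqType) (r : seq J) (G : J -> F) :
  (forall j, j \in r -> homog d (G j)) -> homog d (\sum_(j <- r) G j).
Proof.
elim: r => [|a r IH] hG; first by rewrite big_nil; exact: homog0.
rewrite big_cons; apply: homogD; first by apply: hG; rewrite mem_head.
by apply: IH => j jr; apply: hG; rewrite in_cons jr orbT.
Qed.

Lemma homog_linext (d e : nat) (f : basis -> F) (x : F) :
  (forall b : basis, size b.1 = d -> homog e (f b)) -> homog d x ->
  homog e (linext f x).
Proof.
move=> hf hx; apply: homog_sum => b bx; apply: homogZ; apply: hf.
by apply: hx; rewrite mcoeff_neq0.
Qed.

Lemma homog_Ldual (j : I) (d : nat) (x : F) : homog d.+1 x -> homog d (Ldual j x).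
Proof.
apply: homog_linext => -[w s] /= sw; apply: homog_sum => k.
rewrite mem_index_iota => /andP[k_gt0 k_le]; case: ifP => _; last exact: homog0.
apply/homogZ/homogU; rewrite /= size_cat size_take size_drop sw.
rewrite sw in k_le; have -> : (d.+1 - k < d.+1)%N by lia.
lia.
Qed.

Lemma Teq_swap_head (a x : I) (r : word) (s : finperm) :
  Teq ((-1) ^+ (par x * par a) *: << ((x :: a :: r, lmul_s (size r).+1 s) : basis) >>)
      << ((a :: x :: r, s) : basis) >>.
Proof.
apply: Teq_sym; rewrite -[X in Teq X _](signrZK (par x * par a)); apply: TeqZ.
have := rel_space_relgen (x :: a :: r) (size r).+1 s.
by rewrite /relgen /= ltnSn subnn.
Qed.

Lemma cycle_mulnn (d : nat) (s : finperm) : cycle_mul d d s = s.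
Proof. by rewrite /cycle_mul subnn. Qed.

Lemma cycle_mulS (d k : nat) (s : finperm) : (k <= d)%N ->
  cycle_mul d.+1 k s = lmul_s d (cycle_mul d k s).
Proof. by move=> k_le; rewrite /cycle_mul subSn // -addn1 iotaD foldl_cat /= subnKC. Qed.

(* Induction on the number p of factors in front of x: each step is one
   relation generator swapping x with the factor just before it. *)
Lemma Teq_move_front (p : nat) (w : word) (x : I) (rest : word) (s : finperm) :
  drop p w = x :: rest ->
  Teq ((-1) ^+ (par x * \sum_(t <- take p w) par t) *:
        << ((x :: take p w ++ rest, cycle_mul (size w) (size w - p) s) : basis) >>)
      << ((w, s) : basis) >>.
Proof.
elim: p w => [|p IH] [|a w] //= hd.
  case: hd => -> ->; rewrite big_nil muln0 expr0 scale1r subn0 cycle_mulnn.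
  exact: Teq_refl.
have size_w : size w = (size (take p w ++ rest)).+1.
  by rewrite -{1}(cat_take_drop p w) hd !size_cat /= addnS.
have := Teq_Lv a (IH w hd); rewrite linearZ /= !LvU /= => IHw.
rewrite subSS (cycle_mulS _ (leq_subr _ _)); apply: Teq_trans _ IHw.
rewrite big_cons mulnDr exprD mulrC -scalerA; apply: TeqZ.
have := Teq_swap_head a x (take p w ++ rest) (cycle_mul (size w) (size w - p) s).
by rewrite -size_w.
Qed.

Lemma Teq_reinsert (w : word) (s : finperm) (k : nat) : (0 < k <= size w)%N ->
  Teq (\sum_(j : I) Lv j
         (if ohead (drop (size w - k) w) == Some j then
            (-1) ^+ (par j * \sum_(t <- take (size w - k) w) par t) *:
              << ((take (size w - k) w ++ drop (size w - k).+1 w,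
                   cycle_mul (size w) k s) : basis) >>
          else 0))
      << ((w, s) : basis) >>.
Proof.
move=> /andP[k_gt0 k_le].
have [x [rest hd]] : exists x rest, drop (size w - k) w = x :: rest.
  case E: drop => [|x rest]; last by exists x, rest.
  by move: (size_drop (size w - k) w); rewrite E subKn // => k0; rewrite -k0 in k_gt0.
rewrite hd /= (bigD1 x) //= [X in _ + X]big1 ?addr0 => [|j x_neq_j]; last first.
  have [[eq_xj]|_] := eqVneq (Some x) (Some j); last by rewrite /= linear0.
  by rewrite eq_xj eqxx in x_neq_j.
rewrite eqxx linearZ /= LvU /= -add1n -drop_drop hd /= drop0.
by have := Teq_move_front s hd; rewrite (subKn k_le).
Qed.

Lemma sum_Lv_LdualU (w : word) (s : finperm) :
  Teq (\sum_(j : I) Lv j (Ldual j << ((w, s) : basis) >>))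
      ((size w)%:R *: << ((w, s) : basis) >>).
Proof.
under eq_bigr => j _ do rewrite /Ldual linextU /= linear_sum.
have -> : (size w)%:R *: << ((w, s) : basis) >> =
    \sum_(1 <= k < (size w).+1) (<< ((w, s) : basis) >> : F).
  by rewrite sumr_const_nat subn1 scaler_nat.
rewrite exchange_big /=; apply: (@Teq_sum nat) => k.
by rewrite mem_index_iota; exact: Teq_reinsert.
Qed.

Lemma sum_Lv_Ldual (d : nat) (x : F) : homog d x ->
  Teq (\sum_(j : I) Lv j (Ldual j x)) (d%:R *: x).
Proof.
move=> hx; suff : Teq (\sum_(j : I) Lv j (Ldual j (\sum_(b <- msupp x) x@_b *: << b >>)))
                      (d%:R *: \sum_(b <- msupp x) x@_b *: << b >>) by rewrite -monalgZE.
rewrite scaler_sumr.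
under eq_bigr => j _ do rewrite [Ldual j _]linear_sum /= linear_sum.
rewrite exchange_big /=; apply: Teq_sum => b bx.
under eq_bigr => j _ do rewrite !linearZ /=.
rewrite -scaler_sumr scalerA mulrC -scalerA; apply: TeqZ.
have := hx b; rewrite mcoeff_neq0 => /(_ bx) <-.
by case: b {bx} => w s; exact: sum_Lv_LdualU.
Qed.

Definition Asum (d : nat) (x : F) : F :=
  \sum_(u : d.-tuple I) foldr (fun i y => Lv i y) (foldl (fun y i => Ldual i y) x u) u.

Lemma Asum0 (x : F) : Asum 0 x = x.
Proof.
rewrite /Asum (eq_bigr (fun _ => x)) => [|u _]; last by rewrite tuple0.
by rewrite sumr_const card_tuple expn0.
Qed.

Lemma AsumS (d : nat) (x : F) : Asum d.+1 x = \sum_(j : I) Lv j (Asum d (Ldual j x)).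
Proof. by rewrite /Asum big_tupleS; apply: eq_bigr => j _; rewrite linear_sum. Qed.

Lemma Asum_homog (d : nat) (x : F) : homog d x -> Teq (Asum d x) (d`!%:R *: x).
Proof.
elim: d x => [|d IH] x hx; first by rewrite Asum0 fact0 scale1r; exact: Teq_refl.
rewrite AsumS; apply: Teq_trans (_ : Teq _ (\sum_(j : I) Lv j (d`!%:R *: Ldual j x))) _.
  by apply: Teq_sum => j _; apply/Teq_Lv/IH/homog_Ldual.
under eq_bigr => j _ do rewrite linearZ /=.
by rewrite -scaler_sumr factS natrM mulrC -scalerA; apply/TeqZ/sum_Lv_Ldual.
Qed.
End TensorAlgebra.

Theorem proposition3p6 (R : realType) (m n : nat) (hm : (0 < m)%N) (hn : (0 < n)%N)
  (d : nat) (hd : (1 <= d)%N) (phi : F R m n) :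
  homog d phi -> Teq (A d phi) phi.
Proof.
move=> hphi.
have fact_neq0 : (d`!%:R : C R) != 0 by rewrite pnatr_eq0 -lt0n fact_gt0.
have -> : A d phi = (d`!%:R)^-1 *: Asum d phi by [].
apply: Teq_trans (TeqZ _ (Asum_homog hphi)) _.
rewrite scalerA (mulVf fact_neq0) scale1r; exact: Teq_refl.
Qed.
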